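(* Let $F\le \mathrm{SL}_2(\mathbb{Z})$ be a free group with free basis $s_1,\dots,s_d$, and let $S=\{s_1^{\pm1},\dots,s_d^{\pm1}\}$. Let $p$ be a prime such that the reduction map $\pi_p:\mathrm{SL}_2(\mathbb{Z})\to\mathrm{SL}_2(\mathbb{F}_p)$ is injective on $S$, and identify $S$ with $\pi_p(S)$. Let $\|\cdot\|$ be a norm on $M_2(\mathbb{R})$ satisfying $\|X\|\ge\|X\|_\infty$ for all $X\in M_2(\mathbb{R})$, let \[\eta=\sup_{g,h\in\mathrm{SL}_2(\mathbb{Z})}\frac{\|gh\|}{\|g\|\,\|h\|},\] assume $\eta<\infty$, and let $M=\max_{s\in S}\|s\|$. If $\mathfrak g$ is the girth of $\mathrm{Cay}(\mathrm{SL}_2(\mathbb{F}_p),S)$, then \[(\eta M)^{\lceil \mathfrak g/2\rceil}\ \ge\ \frac{\eta\, p}{2}.\]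
   Context: $\|X\|_\infty$ denotes the maximum of the absolute values of the entries of the matrix $X$. For a group $G$ and symmetric $T=T^{-1}\subseteq G$, $\mathrm{Cay}(G,T)$ is the graph on $G$ with edges $\{g,gt\}$, $g\in G$, $t\in T$; its girth is the smallest $k\ge1$ for which there exist $t_1,\dots,t_k\in T$ with $t_it_{i+1}\ne e$ for all $1\le i<k$ and $t_1\cdots t_k=e$. *)

From HB Require Import structures.
From mathcomp Require Import all_boot all_order all_algebra.
Set Implicit Arguments. Unset Strict Implicit. Unset Printing Implicit Defensive.
Import Order.TTheory GRing.Theory Num.Theory.
Local Open Scope ring_scope.

Definition inSL2Z (g : 'M[int]_2) : Prop := \det g = 1.

Definition letter (d : nat) (s : 'I_d -> 'M[int]_2) (x : 'I_d * bool) : 'M[int]_2 :=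
  if x.2 then s x.1 else invmx (s x.1).

Definition reduced_word (d : nat) (w : seq ('I_d * bool)) : bool :=
  match w with
  | [::] => true
  | x :: w' => path (fun a b : 'I_d * bool => (a.1 != b.1) || (a.2 == b.2)) x w'
  end.

Definition eval_word (d : nat) (s : 'I_d -> 'M[int]_2) (w : seq ('I_d * bool)) : 'M[int]_2 :=
  foldr (fun x acc => letter s x * acc) 1 w.

Definition free_basis (d : nat) (s : 'I_d -> 'M[int]_2) : Prop :=
  forall w : seq ('I_d * bool), reduced_word w -> w != [::] -> eval_word s w != 1.

Definition redp (p : nat) (g : 'M[int]_2) : 'M['F_p]_2 := map_mx (fun z : int => z%:~R) g.

Definition toR (R : realFieldType) (g : 'M[int]_2) : 'M[R]_2 := map_mx (fun z : int => z%:~R) g.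

Definition is_norm (R : realFieldType) (N : 'M[R]_2 -> R) : Prop :=
  [/\ forall X, N X = 0 -> X = 0,
      forall (a : R) X, N (a *: X) = `|a| * N X
    & forall X Y, N (X + Y) <= N X + N Y].

Definition maxabs (R : realFieldType) (X : 'M[R]_2) : R :=
  \big[Num.max/0]_(i < 2) \big[Num.max/0]_(j < 2) `|X i j|.

(* girth of Cay(G,T) following the paper: a k-cycle is t_1..t_k in T with
   t_i t_{i+1} != e and t_1 ... t_k = e *)
Definition has_cycle (p : nat) (T : pred 'M['F_p]_2) (k : nat) : Prop :=
  exists ts : seq 'M['F_p]_2,
    [/\ size ts = k, all T ts,
        (forall i : nat, (i.+1 < size ts)%N -> nth 0 ts i * nth 0 ts i.+1 != 1)
      & foldr (fun t acc => t * acc) 1 ts = 1].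

Definition is_girth (p : nat) (T : pred 'M['F_p]_2) (k : nat) : Prop :=
  [/\ (1 <= k)%N, has_cycle T k & forall k', (1 <= k')%N -> (k' < k)%N -> ~ has_cycle T k'].

From HB Require Import structures.
From mathcomp Require Import all_boot all_order all_algebra ring lra zify.
Import Order.TTheory GRing.Theory Num.Theory.
Local Open Scope ring_scope.
Set Implicit Arguments. Unset Strict Implicit.

(* A girth cycle of length g in Cay(SL_2(F_p), S) lifts to a
   freely reduced word w of length g in the free basis whose value is
   trivial mod p (lift_cycle).  Split w = (first ceil(g/2) letters)(rest)
   and let A be the value of the prefix and B the inverse of the value of
   the rest.  Freeness gives A <> B, while A = B mod p, so some entry of A
   or of B has absolute value at least p/2 (short_word_large_entry); both
   are words of length at most ceil(g/2).  Finally, submultiplicativity up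
   to eta bounds the norm of a word of length n by eta^(n-1) M^n, the norm
   dominates the largest entry, and eta M >= 1 (large_entry_bound). *)

Section Words.
Variables (d : nat) (s : 'I_d -> 'M[int]_2).
Hypothesis sSL : forall i, inSL2Z (s i).

Lemma letter_det (x : 'I_d * bool) : \det (letter s x) = 1.
Proof.
rewrite /letter; case: x.2; first exact: sSL.
by rewrite det_inv sSL invr1.
Qed.

Definition flip (x : 'I_d * bool) : 'I_d * bool := (x.1, ~~ x.2).

Lemma letter_flip (x : 'I_d * bool) : letter s (flip x) * letter s x = 1.
Proof.
have s_unit : s x.1 \in unitmx by rewrite unitmxE sSL unitr1.
by rewrite /letter /flip -mulmxE; case: x.2 => /=; [exact: mulVmx | exact: mulmxV].
Qed.

Lemma letter_cancel (x y : 'I_d * bool) :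
  ~~ ((x.1 != y.1) || (x.2 == y.2)) -> letter s x * letter s y = 1.
Proof.
rewrite negb_or negbK => /andP [/eqP e1 e2].
have -> : x = flip y by case: x y e1 e2 => [x1 [] [y1 []]] //= ->.
exact: letter_flip.
Qed.

Lemma eval_cat (w1 w2 : seq ('I_d * bool)) :
  eval_word s (w1 ++ w2) = eval_word s w1 * eval_word s w2.
Proof. by elim: w1 => [|x w IH] /=; rewrite ?mul1r // IH mulrA. Qed.

Fixpoint inv_word (w : seq ('I_d * bool)) : seq ('I_d * bool) :=
  if w is x :: w' then rcons (inv_word w') (flip x) else [::].

Lemma size_inv_word (w : seq ('I_d * bool)) : size (inv_word w) = size w.
Proof. by elim: w => //= x w IH; rewrite size_rcons IH. Qed.

Lemma eval_inv_word (w : seq ('I_d * bool)) :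
  eval_word s (inv_word w) * eval_word s w = 1.
Proof.
elim: w => [|x w IH] /=; first by rewrite mul1r.
rewrite -cats1 eval_cat /= mulr1 -mulrA (mulrA (letter s _)) letter_flip.
by rewrite mul1r.
Qed.

Lemma eval_word_SL (w : seq ('I_d * bool)) : inSL2Z (eval_word s w).
Proof.
rewrite /inSL2Z; elim: w => [|x w IH] /=; first by rewrite det1.
by rewrite -mulmxE det_mulmx letter_det IH mulr1.
Qed.

End Words.

Lemma redpM (p : nat) (a b : 'M[int]_2) : redp p (a * b) = redp p a * redp p b.
Proof. by rewrite /redp -!mulmxE; exact: (map_mxM (intmul (1 : 'F_p))). Qed.

Lemma redp1 (p : nat) : redp p 1 = 1.
Proof. exact: (map_mx1 (intmul (1 : 'F_p))). Qed.

Lemma redp_eval_word (d p : nat) (s : 'I_d -> 'M[int]_2) (w : seq ('I_d * bool)) :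
  redp p (eval_word s w) = foldr (fun t acc => t * acc) 1 [seq redp p (letter s x) | x <- w].
Proof. by elim: w => [|x w IH] /=; rewrite ?redp1 // redpM IH. Qed.

Lemma redp_eq_entry (p : nat) (A B : 'M[int]_2) : prime p ->
  redp p A = redp p B -> A != B -> exists i j, (p%:Z <= `|A i j - B i j|).
Proof.
move=> p_pr eqAB neqAB.
have [[i j] /= neq_ij | eq_all] := pickP (fun ij => A ij.1 ij.2 != B ij.1 ij.2); last first.
  by case/eqP: neqAB; apply/matrixP => i j; apply/eqP/negbFE/(eq_all (i, j)).
exists i, j.
have p_dvd : (p %| A i j - B i j)%Z.
  rewrite (dvdz_pcharf (pchar_Fp p_pr)) intrB.
  by have := congr1 (fun X : 'M['F_p]_2 => X i j) eqAB; rewrite !mxE => ->; rewrite subrr.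
rewrite -abszE lez_nat; apply: dvdn_leq; last by move: p_dvd; rewrite dvdzE.
by rewrite absz_gt0 subr_eq0.
Qed.

Lemma lift_cycle (d p : nat) (s : 'I_d -> 'M[int]_2) (k : nat) :
  (forall i, inSL2Z (s i)) ->
  has_cycle (fun X : 'M['F_p]_2 => [exists x, X == redp p (letter s x)]) k ->
  exists w : seq ('I_d * bool),
    [/\ size w = k, reduced_word w & redp p (eval_word s w) = 1].
Proof.
move=> sSL [ts [size_ts all_ts nonback prod_ts]].
have [w def_ts] : exists w, [seq redp p (letter s x) | x <- w] = ts.
  elim: ts all_ts {size_ts nonback prod_ts} => [|t ts IH] /=; first by exists [::].
  by case/andP => /existsP [x /eqP ->] /IH [w <-]; exists (x :: w).
subst ts; exists w; split; rewrite ?redp_eval_word -?size_ts ?size_map //.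
case: w {all_ts size_ts prod_ts} nonback => [|x w] // nonback.
apply/(pathP x) => i lt_i_w.
have := nonback i; rewrite size_map ltnS => /(_ lt_i_w).
rewrite (nth_map x) ?(nth_map x) //=; last exact: ltnW.
by apply: contraR => /(letter_cancel sSL) cancel; rewrite -redpM cancel redp1.
Qed.

Lemma SL1 : inSL2Z 1.
Proof. by rewrite /inSL2Z det1. Qed.

Lemma maxabs_ge (R : realFieldType) (X : 'M[R]_2) (i j : 'I_2) : `|X i j| <= maxabs X.
Proof.
apply: le_trans (le_bigmax _ _ i); exact: (le_bigmax _ (fun j => `|X i j|) j).
Qed.

Section WordNorm.
Variables (R : realFieldType) (d : nat) (s : 'I_d -> 'M[int]_2).
Variables (N : 'M[R]_2 -> R) (eta M : R).
Hypotheses (sSL : forall i, inSL2Z (s i)) (N_norm : is_norm N)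
  (N_ge_maxabs : forall X : 'M[R]_2, maxabs X <= N X)
  (eta_ratio : forall a b : 'M[int]_2, inSL2Z a -> inSL2Z b ->
      N (toR R (a * b)) / (N (toR R a) * N (toR R b)) <= eta)
  (M_def : M = \big[Num.max/0]_(x : 'I_d * bool) N (toR R (letter s x))).

Lemma N_ge0 (X : 'M[R]_2) : 0 <= N X.
Proof. exact: le_trans (le_trans (normr_ge0 _) (maxabs_ge X 0 0)) (N_ge_maxabs X). Qed.

(* Matrices of SL_2(Z) are nonzero, hence have positive norm. *)
Lemma N_SL_gt0 (a : 'M[int]_2) : inSL2Z a -> 0 < N (toR R a).
Proof.
move=> a_SL; rewrite lt_def N_ge0 andbT; case: N_norm => N_eq0 _ _.
apply/eqP => /N_eq0 toR_a0; have a0 : a = 0.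
  apply/matrixP => i j; have := congr1 (fun X : 'M[R]_2 => X i j) toR_a0.
  by rewrite !mxE => /eqP; rewrite intr_eq0 => /eqP.
by move: a_SL; rewrite /inSL2Z a0 det0.
Qed.

Lemma N_subM (a b : 'M[int]_2) : inSL2Z a -> inSL2Z b ->
  N (toR R (a * b)) <= eta * (N (toR R a) * N (toR R b)).
Proof.
move=> a_SL b_SL; have := eta_ratio a_SL b_SL.
by rewrite ler_pdivrMr // mulr_gt0 // N_SL_gt0.
Qed.

(* Taking a = b = 1 shows eta >= 1 / N(1) > 0. *)
Lemma eta_gt0 : 0 < eta.
Proof.
have := eta_ratio SL1 SL1; rewrite mulr1; apply: lt_le_trans.
by rewrite divr_gt0 ?mulr_gt0 ?(N_SL_gt0 SL1).
Qed.

Lemma N_letter_le (x : 'I_d * bool) : N (toR R (letter s x)) <= M.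
Proof. by rewrite M_def; exact: (le_bigmax _ (fun x => N (toR R (letter s x))) x). Qed.

(* As soon as there is a letter, eta * M >= 1: both 1 <= eta * N(1) and
   N(1) = N(x^-1 x) <= eta * M^2 follow from submultiplicativity. *)
Lemma etaM_ge1 (x : 'I_d * bool) : 1 <= eta * M.
Proof.
have N1_gt0 := N_SL_gt0 SL1.
have one_le : 1 <= eta * N (toR R 1).
  by have := N_subM SL1 SL1; rewrite mulr1 -(ler_pM2r N1_gt0) mul1r mulrA.
have N1_le : N (toR R 1) <= eta * (M * M).
  rewrite -(letter_flip sSL x); apply: le_trans (N_subM (letter_det sSL _) (letter_det sSL _)) _.
  by rewrite ler_wpM2l ?(ltW eta_gt0) // ler_pM ?N_ge0 ?N_letter_le.
have sq_ge1 : 1 <= (eta * M) ^+ 2.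
  apply: le_trans one_le _; rewrite expr2 mulrACA -mulrA ler_wpM2l ?(ltW eta_gt0) //.
have etaM_ge0 : 0 <= eta * M.
  by rewrite mulr_ge0 ?(ltW eta_gt0) // (le_trans (N_ge0 _) (N_letter_le x)).
by move: sq_ge1 etaM_ge0; rewrite expr2; nra.
Qed.

Lemma N_word_le (w : seq ('I_d * bool)) : w != [::] ->
  N (toR R (eval_word s w)) <= eta ^+ (size w).-1 * M ^+ size w.
Proof.
elim: w => [|x [|y w] IH] // _; first by rewrite /= mulr1 mul1r expr1 N_letter_le.
apply: le_trans (N_subM (letter_det sSL x) (eval_word_SL sSL (y :: w))) _.
rewrite [X in _ <= X](_ : _ = eta * (M * (eta ^+ (size w) * M ^+ (size w).+1))); last first.
  by rewrite /= !exprS; ring.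
rewrite ler_wpM2l ?(ltW eta_gt0) // ler_pM ?N_ge0 ?N_letter_le //; exact: IH.
Qed.

Lemma large_entry_bound (c n : nat) (w : seq ('I_d * bool)) (i j : 'I_2) :
  w != [::] -> (size w <= n)%N -> (c%:Z <= 2 * `|eval_word s w i j|) ->
  eta * c%:R / 2 <= (eta * M) ^+ n.
Proof.
case: w => [|x w] // _ w_le c_le.
have half_c_le : c%:R / 2 <= N (toR R (eval_word s (x :: w))).
  apply: le_trans (N_ge_maxabs _); apply: le_trans (maxabs_ge _ i j).
  rewrite mxE -intr_norm ler_pdivrMr // mulrC.
  by rewrite -[2 : R]/(2%:~R) -[c%:R : R]/(c%:Z%:~R) -intrM ler_int.
apply: le_trans (ler_weXn2l (etaM_ge1 x) w_le).
rewrite -mulrA; apply: le_trans (ler_wpM2l (ltW eta_gt0) (le_trans half_c_le (N_word_le _))) _ => //.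
by rewrite exprMn [size _]/= [eta ^+ _.+1]exprS mulrA.
Qed.

End WordNorm.

(* Core of the argument: cut a reduced word w that is trivial mod p into a
   prefix A of length ceil(|w|/2) and the rest D.  With B the inverse of D,
   A and B are distinct (freeness) but congruent mod p, so one of them has
   an entry of absolute value at least p/2; both have length <= ceil(|w|/2). *)
Lemma short_word_large_entry (d p : nat) (s : 'I_d -> 'M[int]_2)
    (w : seq ('I_d * bool)) :
  (forall i, inSL2Z (s i)) -> free_basis s -> prime p ->
  reduced_word w -> w != [::] -> redp p (eval_word s w) = 1 ->
  exists v (i j : 'I_2),
    [/\ v != [::], (size v <= uphalf (size w))%N & p%:Z <= 2 * `|eval_word s v i j|].
Proof.
move=> sSL s_free p_pr w_red w_nil w_triv.
set k := uphalf (size w).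
set A := eval_word s (take k w); set D := eval_word s (drop k w).
set B := eval_word s (inv_word (drop k w)).
have w_AD : eval_word s w = A * D by rewrite -eval_cat cat_take_drop.
have DB : D * B = 1 by rewrite -mulmxE; apply/mulmx1C; rewrite mulmxE eval_inv_word.
have redAB : redp p A = redp p B.
  by rewrite -[A]mulr1 -DB mulrA -w_AD redpM w_triv mul1r.
have neqAB : A != B.
  by apply: contra (s_free w w_red w_nil) => /eqP eqAB; rewrite w_AD eqAB eval_inv_word.
have [i [j p_le]] := redp_eq_entry p_pr redAB neqAB.
have triangle := ler_normB (A i j) (B i j); have p_gt1 := prime_gt1 p_pr.
have size_w_gt0 : (0 < size w)%N by rewrite lt0n size_eq0.
have [k_gt0 k_le k_half] : [/\ (0 < k)%N, (k <= size w)%N & (size w - k <= k)%N].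
  by rewrite /k uphalfE; split; lia.
have size_A : size (take k w) = k by rewrite size_take_min; apply/minn_idPl.
have size_B : size (inv_word (drop k w)) = (size w - k)%N.
  by rewrite size_inv_word size_drop.
case: (leP `|B i j| `|A i j|) => [B_le_A | A_lt_B].
  by exists (take k w), i, j; split; rewrite -?size_eq0 ?size_A -?lt0n -/A //; lia.
exists (inv_word (drop k w)), i, j; split; rewrite ?size_B -/B //; last by lia.
apply/eqP => B_nil; move: A_lt_B triangle p_le; rewrite /B B_nil /= mxE.
by case: (i == j); rewrite ?normr1 ?normr0; lia.
Qed.

Theorem lemma2p4 (R : realFieldType) (d : nat) (s : 'I_d -> 'M[int]_2) (p : nat)
    (N : 'M[R]_2 -> R) (eta M : R) (g : nat) :
  (forall i, inSL2Z (s i)) ->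
  free_basis s ->
  prime p ->
  (forall x y : 'I_d * bool,
      redp p (letter s x) = redp p (letter s y) -> letter s x = letter s y) ->
  is_norm N ->
  (forall X : 'M[R]_2, maxabs X <= N X) ->
  (forall a b : 'M[int]_2, inSL2Z a -> inSL2Z b ->
      N (toR R (a * b)) / (N (toR R a) * N (toR R b)) <= eta) ->
  (forall e : R, (forall a b : 'M[int]_2, inSL2Z a -> inSL2Z b ->
      N (toR R (a * b)) / (N (toR R a) * N (toR R b)) <= e) -> eta <= e) ->
  M = \big[Num.max/0]_(x : 'I_d * bool) N (toR R (letter s x)) ->
  is_girth (fun X : 'M['F_p]_2 => [exists x : 'I_d * bool, X == redp p (letter s x)]) g ->
  eta * p%:R / 2 <= (eta * M) ^+ (uphalf g).
Proof.
move=> sSL s_free p_pr _ N_norm N_ge_maxabs eta_ratio _ M_def [g_gt0 g_cycle _].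
have [w [size_w w_red w_triv]] := lift_cycle sSL g_cycle.
have w_nil : w != [::] by rewrite -size_eq0 size_w -lt0n.
have [v [i [j [v_nil v_short v_entry]]]] :=
  short_word_large_entry sSL s_free p_pr w_red w_nil w_triv.
apply: (large_entry_bound sSL N_norm N_ge_maxabs eta_ratio M_def v_nil _ v_entry).
by rewrite -size_w.
Qed.
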